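(* For every integer $n\ge 1$, $$2^n\hat{A}_n(x)=\sum_{\sigma\in\mathfrak S_n}(1+x)^{\mathrm{dda}(\sigma)}\,2^{\mathrm{val}(\sigma)}\,(1+x^2)^{\mathrm{pk}(\sigma)},$$ where the statistics $\mathrm{dda},\mathrm{val},\mathrm{pk}$ are computed with the convention $\sigma(0)=\sigma(n+1)=n+1$; and $$\hat{B}_n(x)=\sum_{\sigma\in\mathfrak S_n}(1+x)^{\mathrm{dda}^0(\sigma)}\,2^{\mathrm{val}^0(\sigma)}\,(1+x^2)^{\mathrm{pk}^0(\sigma)},$$ where the statistics $\mathrm{dda}^0,\mathrm{val}^0,\mathrm{pk}^0$ are computed with the convention $\sigma(0)=0$, $\sigma(n+1)=n+1$.
   Context: $\mathfrak S_n$ is the symmetric group on $[n]=\{1,\dots,n\}$, permutations written as words $\sigma(1)\cdots\sigma(n)$. For $\sigma\in\mathfrak S_n$, an index $i\in[n-1]$ is an alternating descent of $\sigma$ if either $\sigma(i)>\sigma(i+1)$ and $i$ is odd, or $\sigma(i)<\sigma(i+1)$ and $i$ is even; $\hat d(\sigma)$ is the number of alternating descents and $\hat A_n(x)=\sum_{\sigma\in\mathfrak S_n}x^{\hat d(\sigma)}$. $\mathcal B_n$ is the set of signed permutations: bijections $\pi$ of $\{\pm1,\dots,\pm n\}$ with $\pi(-i)=-\pi(i)$, identified with the word $\pi(1)\cdots\pi(n)$, and always prepended with $\pi(0)=0$. An index $i\in\{0\}\cup[n-1]$ is an alternating descent of $\pi\in\mathcal B_n$ if either $\pi(i)<\pi(i+1)$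 and $i$ is even, or $\pi(i)>\pi(i+1)$ and $i$ is odd; $\hat d_B(\pi)$ is their number and $\hat B_n(x)=\sum_{\pi\in\mathcal B_n}x^{\hat d_B(\pi)}$. Given $\sigma\in\mathfrak S_n$ extended by values $\sigma(0)$ and $\sigma(n+1)$ (according to a stated convention), an index $i\in[n]$ is a double ascent if $\sigma(i-1)<\sigma(i)<\sigma(i+1)$, a double descent if $\sigma(i-1)>\sigma(i)>\sigma(i+1)$, a valley if $\sigma(i-1)>\sigma(i)<\sigma(i+1)$, and a peak if $\sigma(i-1)<\sigma(i)>\sigma(i+1)$. $\mathrm{val}$ and $\mathrm{pk}$ denote the numbers of valleys and peaks, and $\mathrm{dda}$ the number of double ascents plus double descents. *)

From HB Require Import structures.
From mathcomp Require Import all_boot all_order all_algebra all_fingroup.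
Set Implicit Arguments. Unset Strict Implicit. Unset Printing Implicit Defensive.
Import Order.TTheory GRing.Theory Num.Theory.

(* A permutation s : 'S_n (of 'I_n = {0..n-1}) is read as the word
   sigma(1) ... sigma(n) on [n] = {1..n} via sigma(i) = s(i-1) + 1. *)
Definition pword (n : nat) (s : 'S_n) (i : nat) : nat :=
  match @insub nat (fun k => k < n) 'I_n (i.-1) with
  | Some j => (s j).+1
  | None => 0
  end.

Definition ext (n : nat) (a b : nat) (s : 'S_n) (i : nat) : nat :=
  if i == 0 then a else if i == n.+1 then b else pword s i.

Definition altdes (n : nat) (s : 'S_n) : nat :=
  count (fun i => (odd i && (pword s i.+1 < pword s i))
                  || (~~ odd i && (pword s i < pword s i.+1)))
        (iota 1 n.-1).

Definition A_hat (n : nat) : {poly int} := \sum_(s : 'S_n) 'X^(altdes s).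

(* Signed permutations of [n]: a pair (s, e) with s : 'S_n and a sign vector
   e; it represents pi with pi(i) = (-1)^(e (i-1)) * (s(i-1)+1) for i in [n],
   extended to pi(-i) = -pi(i).  This is a bijection with B_n. *)
Definition signed_perm (n : nat) := ('S_n * {ffun 'I_n -> bool})%type.

Definition sword (n : nat) (p : signed_perm n) (i : nat) : int :=
  match @insub nat (fun k => k < n) 'I_n (i.-1) with
  | Some j => if i == 0 then 0%R
              else ((-1) ^+ (p.2 j) * ((p.1 j).+1)%:Z)%R
  | None => 0%R
  end.

(* alternating descents of pi in B_n: i in {0} u [n-1] = {0..n-1}, pi(0)=0. *)
Definition altdesB (n : nat) (p : signed_perm n) : nat :=
  count (fun i => (~~ odd i && (sword p i < sword p i.+1)%R)
                  || (odd i && (sword p i.+1 < sword p i)%R))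
        (iota 0 n).

Definition B_hat (n : nat) : {poly int} := \sum_(p : signed_perm n) 'X^(altdesB p).

Definition dda (n a b : nat) (s : 'S_n) : nat :=
  count (fun i => ((ext a b s i.-1 < ext a b s i) && (ext a b s i < ext a b s i.+1))
               || ((ext a b s i < ext a b s i.-1) && (ext a b s i.+1 < ext a b s i)))
        (iota 1 n).

Definition valley (n a b : nat) (s : 'S_n) : nat :=
  count (fun i => (ext a b s i < ext a b s i.-1) && (ext a b s i < ext a b s i.+1))
        (iota 1 n).

Definition peak (n a b : nat) (s : 'S_n) : nat :=
  count (fun i => (ext a b s i.-1 < ext a b s i) && (ext a b s i.+1 < ext a b s i))
        (iota 1 n).

(* Twisting a signed word w by v k := (-1)^k w k turns the alternating descents of w into
   the positions i with v i + v (i+1) < 0.  As the |v k| are distinct, the sign of such a sum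
   is the sign of its entry of larger absolute value, so the alternating descents are counted
   by charging every negative position k with the number of its neighbours of smaller absolute
   value: 0 at a valley, 1 at a double ascent or descent, 2 at a peak.  Summing x^charge over
   the 2^n sign vectors therefore factors into a product of 2, 1 + x and 1 + x^2 over the
   positions.  For B_n the sum runs over signed permutations, bordered by 0.  For A_n, the
   2^n copies of S_n are reindexed by composing with the standardisation of the signed values
   of a sign vector, which makes the alternating descents those of a signed word bordered
   by n + 1. *)

From mathcomp Require Import all_boot all_order all_algebra all_fingroup.
From mathcomp Require Import zify ring.
Set Implicit Arguments. Unset Strict Implicit. Unset Printing Implicit Defensive.
Import Order.TTheory GRing.Theory.

Section RankPerm.

Variables (d : Order.disp_t) (T : orderType d) (n : nat) (g : 'I_n -> T).
Hypothesis g_inj : injective g.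

Definition rank_nat (m : 'I_n) : nat := #|[set k | g k < g m]|%O.

Lemma rank_nat_lt m : rank_nat m < n.
Proof.
rewrite -[n in _ < n]card_ord (cardD1 m) add1n ltnS.
apply/subset_leq_card/subsetP => k; rewrite !inE andbT => lt_km.
by apply: contraTneq lt_km => ->; rewrite ltxx.
Qed.

Definition rank (m : 'I_n) : 'I_n := Ordinal (rank_nat_lt m).

Lemma rank_nat_mono a b : (g a < g b)%O -> rank_nat a < rank_nat b.
Proof.
move=> lt_ab; apply/proper_card/properP; split.
  by apply/subsetP => k; rewrite !inE => /lt_trans; apply.
by exists a; rewrite !inE ?ltxx.
Qed.

Lemma rank_lt a b : (rank a < rank b) = (g a < g b)%O.
Proof.
apply/idP/idP => [|/rank_nat_mono //]; rewrite /= => lt_ab.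
case: (ltgtP (g a) (g b)) => // [gt_ab|/g_inj eq_ab].
  by move: (rank_nat_mono gt_ab); rewrite ltnNge ltnW.
by move: lt_ab; rewrite eq_ab ltnn.
Qed.

Lemma rank_inj : injective rank.
Proof.
move=> a b eq_ab; apply: g_inj.
by case: (ltgtP (g a) (g b)) => // lt_ab; move: lt_ab; rewrite -rank_lt eq_ab ltnn.
Qed.

Definition rank_perm : 'S_n := perm rank_inj.

End RankPerm.

Definition smaller_nbrs (a : nat -> nat) (k : nat) : nat := (a k.-1 < a k) + (a k.+1 < a k).

Lemma smaller_nbrs_cases (a : nat -> nat) k : a k.-1 != a k -> a k != a k.+1 ->
  [/\ ((a k.-1 < a k) && (a k < a k.+1)) || ((a k < a k.-1) && (a k.+1 < a k))
        = (smaller_nbrs a k == 1),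
      (a k < a k.-1) && (a k < a k.+1) = (smaller_nbrs a k == 0) &
      (a k.-1 < a k) && (a k.+1 < a k) = (smaller_nbrs a k == 2)].
Proof. by rewrite /smaller_nbrs; case: ltngtP => //; case: (ltngtP (a k) (a k.+1)). Qed.

Definition shift_fun n (h : 'I_n -> bool) (k : nat) : bool :=
  if k is k'.+1 then oapp h false (insub k') else false.

Lemma shift_funE n (h : 'I_n -> bool) (j : 'I_n) : shift_fun h j.+1 = h j.
Proof. by rewrite /shift_fun valK. Qed.

Lemma pwordE n (s : 'S_n) (j : 'I_n) : pword s j.+1 = (s j).+1.
Proof. by rewrite /pword /= valK. Qed.

Lemma extE n a b (s : 'S_n) (j : 'I_n) : ext a b s j.+1 = (s j).+1.
Proof. by rewrite /ext /= eqSS (ltn_eqF (ltn_ord j)) pwordE. Qed.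

Lemma ext_last n a b (s : 'S_n) : 0 < n -> n < b -> ext a b s n < ext a b s n.+1.
Proof.
case: n s => // n s _ lt_nb; rewrite (extE _ _ _ ord_max) /ext /= eqxx.
exact: leq_ltn_trans (ltn_ord _) lt_nb.
Qed.

Lemma ext_neq n a b (s : 'S_n) i : (a = 0 \/ n < a) -> i < n ->
  ext a b s i != ext a b s i.+1.
Proof.
move=> a_out lt_in; rewrite (extE _ _ _ (Ordinal lt_in)).
case: i lt_in => [|i] lt_in.
  case: a_out => [-> //|lt_na].
  by rewrite /ext /= neq_ltn (leq_trans _ lt_na) ?orbT // ltnS ltn_ord.
rewrite (extE _ _ _ (Ordinal (ltnW lt_in))) eqSS.
by apply/eqP => /val_inj/perm_inj/(congr1 val) /=; lia.
Qed.

Lemma ext_neq_nbrs n a (s : 'S_n) k : (a = 0 \/ n < a) -> k \in iota 1 n ->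
  ext a n.+1 s k.-1 != ext a n.+1 s k /\ ext a n.+1 s k != ext a n.+1 s k.+1.
Proof.
move=> a_out; rewrite mem_iota add1n => /andP [k_gt0 lt_kn1].
split; first by rewrite -{2}(prednK k_gt0) ext_neq // -ltnS prednK.
have [lt_kn|ge_kn] := ltnP k n; first exact: ext_neq.
have eq_kn : k = n by apply/eqP; rewrite eqn_leq ge_kn andbT -ltnS.
by rewrite neq_ltn eq_kn ext_last // -eq_kn.
Qed.

Local Open Scope ring_scope.

Lemma prod_1addX_count (R : comPzRingType) (x : R) (T : Type) (c : T -> nat) (l : seq T) :
  (forall k, (c k <= 2)%N) ->
  \prod_(k <- l) (1 + x ^+ c k) =
    (1 + x) ^+ count (fun k => c k == 1%N) l * 2 ^+ count (fun k => c k == 0%N) l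
    * (1 + x ^+ 2) ^+ count (fun k => c k == 2) l.
Proof.
move=> c_le2; elim: l => [|k l IHl]; first by rewrite big_nil !expr0 !mulr1.
rewrite big_cons IHl /= !exprD.
by have := c_le2 k; case: (c k) => [|[|[|m]]] //= _; rewrite ?expr0 ?expr1; ring.
Qed.

Lemma sum_ffun_charges (R : comPzRingType) (x : R) n (o : 'I_n -> bool) (c : 'I_n -> nat) :
  \sum_(e : {ffun 'I_n -> bool}) x ^+ (\sum_j (e j (+) o j) * c j)%N
    = \prod_j (1 + x ^+ c j).
Proof.
transitivity (\prod_j \sum_(b : bool) x ^+ ((b (+) o j) * c j)%N).
  by rewrite bigA_distr_bigA; apply: eq_bigr => e _; rewrite expr_sum.
apply: eq_bigr => j _.
by rewrite big_bool; case: (o j); rewrite /= ?mul0n ?mul1n ?expr0 // addrC.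
Qed.

Lemma sum_ffun_charges_perm (R : comPzRingType) (x : R) n (t : 'S_n)
    (o : 'I_n -> bool) (c : 'I_n -> nat) :
  \sum_(e : {ffun 'I_n -> bool}) x ^+ (\sum_j (e (t j) (+) o j) * c j)%N
    = \prod_j (1 + x ^+ c j).
Proof.
pose compt (e : {ffun 'I_n -> bool}) := [ffun j => e (t j)].
have compt_inj : injective compt.
  move=> e1 e2 /ffunP eq_e; apply/ffunP => m.
  by have := eq_e ((t^-1)%g m); rewrite !ffunE permKV.
rewrite -(sum_ffun_charges x o) [RHS](reindex_inj compt_inj).
by apply: eq_bigr => e _; congr (x ^+ _); apply: eq_bigr => j _; rewrite ffunE.
Qed.

Definition charged (a : nat -> nat) (E : nat -> bool) (k : nat) : int :=
  (-1) ^+ E k * (a k)%:Z.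

Lemma charged_add_lt0 (a : nat -> nat) (E : nat -> bool) i : a i != a i.+1 ->
  (charged a E i + charged a E i.+1 < 0)
    = (E i && (a i.+1 < a i)%N) || (E i.+1 && (a i < a i.+1)%N).
Proof.
rewrite /charged; case: ltngtP => // cmp _.
all: by case: (E i); case: (E i.+1); rewrite /= ?expr0 ?expr1 ?mul1r ?mulN1r; lia.
Qed.

Lemma alt_step_signE (v : nat -> int) i :
  (~~ odd i && ((-1) ^+ odd i * v i < (-1) ^+ odd i.+1 * v i.+1))
  || (odd i && ((-1) ^+ odd i.+1 * v i.+1 < (-1) ^+ odd i * v i))
  = (v i + v i.+1 < 0).
Proof. by rewrite /=; case: (odd i); rewrite /= ?expr0 ?expr1 ?mul1r ?mulN1r; lia. Qed.

Lemma count_neg_adjacent_sums (a : nat -> nat) (E : nat -> bool) n :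
  ~~ E 0 -> (a n < a n.+1)%N -> (forall i, (i < n)%N -> a i != a i.+1) ->
  count (fun i => charged a E i + charged a E i.+1 < 0) (iota 0 n)
    = (\sum_(j < n) E j.+1 * smaller_nbrs a j.+1)%N.
Proof.
move=> E0 a_last a_neq.
rewrite -sumn_count sumnE big_map -[n in iota 0 n]subn0 -/(index_iota 0 n).
transitivity (\sum_(0 <= i < n) (E i * (a i.+1 < a i) + E i.+1 * (a i < a i.+1)))%N.
  apply: eq_big_nat => i /andP [_ lt_in]; rewrite charged_add_lt0 ?a_neq //.
  by move: (a_neq i lt_in); case: ltngtP => //; case: (E i); case: (E i.+1).
have top_last : (E n * (a n.+1 < a n) = 0)%N by rewrite ltnNge (ltnW a_last) muln0.
have tops_shift : (\sum_(0 <= i < n) E i * (a i.+1 < a i)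
                   = \sum_(j < n) E j.+1 * (a j.+2 < a j.+1))%N.
  transitivity (\sum_(0 <= i < n.+1) E i * (a i.+1 < a i))%N.
    by rewrite big_nat_recr //= top_last addn0.
  by rewrite big_nat_recl //= (negbTE E0) add0n big_mkord.
rewrite big_split /= tops_shift big_mkord -big_split.
by apply: eq_bigr => j _; rewrite /smaller_nbrs mulnDr addnC.
Qed.

Lemma swordE n (p : signed_perm n) (j : 'I_n) :
  sword p j.+1 = (-1) ^+ p.2 j * ((p.1 j).+1)%:Z.
Proof. by rewrite /sword /= valK. Qed.

Section SignedPermutations.

Variables (n : nat) (s : 'S_n) (e : {ffun 'I_n -> bool}).

Let a := ext 0 n.+1 s.
Let E k := shift_fun e k (+) odd k.

Lemma sword_charged k : (k <= n)%N -> sword (s, e) k = (-1) ^+ odd k * charged a E k.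
Proof.
rewrite /charged /a /E; case: k => [_|k lt_kn]; first by rewrite /sword !mulr0; case: insub.
rewrite (extE _ _ _ (Ordinal lt_kn)) (shift_funE _ (Ordinal lt_kn)).
rewrite (swordE (s, e) (Ordinal lt_kn)) /=.
by case: (e _); case: (odd k); rewrite /= ?expr0 ?expr1 ?mul1r ?mulN1r ?opprK.
Qed.

Lemma altdesB_charges : (0 < n)%N ->
  altdesB (s, e) = (\sum_(j < n) (e j (+) odd j.+1) * smaller_nbrs a j.+1)%N.
Proof.
move=> n_gt0; rewrite /altdesB.
rewrite (eq_in_count (a2 := fun i => charged a E i + charged a E i.+1 < 0)); last first.
  move=> i; rewrite mem_iota add0n => /andP [_ lt_in].
  by rewrite !sword_charged ?alt_step_signE // ltnW.
rewrite count_neg_adjacent_sums //; first by apply: eq_bigr => j _; rewrite /E shift_funE.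
  exact: ext_last.
by move=> i; apply: ext_neq; left.
Qed.

End SignedPermutations.

Section Standardization.

Variables (n : nat) (f : {ffun 'I_n -> bool}).

Definition signed_val (m : 'I_n) : int := (-1) ^+ f m * (m.+1)%:Z.

Lemma signed_val_inj : injective signed_val.
Proof.
move=> m1 m2; rewrite /signed_val.
case: (f m1); case: (f m2); rewrite ?expr0 ?expr1 ?mul1r ?mulN1r => eq_m.
all: by apply: val_inj => /=; lia.
Qed.

Definition std_perm : 'S_n := rank_perm signed_val_inj.

Variable t : 'S_n.

Let a := ext n.+1 n.+1 t.
Let E k := shift_fun (fun j => f (t j)) k (+) odd k.

Lemma pword_std_lt k1 k2 : (k1 < n)%N -> (k2 < n)%N ->
  (pword (t * std_perm)%g k1.+1 < pword (t * std_perm)%g k2.+1)%N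
  = ((-1) ^+ odd k1.+1 * charged a E k1.+1 < (-1) ^+ odd k2.+1 * charged a E k2.+1).
Proof.
move=> lt_k1n lt_k2n.
have val_charged (j : 'I_n) : signed_val (t j) = (-1) ^+ odd j.+1 * charged a E j.+1.
  rewrite /charged /a /E extE shift_funE /signed_val.
  by rewrite /=; case: (f _); case: (odd _); rewrite /= ?expr0 ?expr1 ?mul1r ?mulN1r ?opprK.
rewrite (pwordE _ (Ordinal lt_k1n)) (pwordE _ (Ordinal lt_k2n)) !permM !permE ltnS.
by rewrite (rank_lt signed_val_inj) (val_charged (Ordinal lt_k1n)) (val_charged (Ordinal lt_k2n)).
Qed.

Lemma altdes_std_charges : (0 < n)%N ->
  altdes (t * std_perm)%g = (\sum_(j < n) (f (t j) (+) odd j.+1) * smaller_nbrs a j.+1)%N.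
Proof.
move=> n_gt0.
have a10 : (a 1 < a 0)%N by rewrite /a (extE _ _ _ (Ordinal n_gt0)) /ext /= ltnS ltn_ord.
have first_step : (charged a E 0 + charged a E 1 < 0) = false.
  by rewrite charged_add_lt0 1?eq_sym ?ltn_eqF // (leq_gtF (ltnW a10)) andbF /E.
transitivity (\sum_(j < n) E j.+1 * smaller_nbrs a j.+1)%N; last first.
  by apply: eq_bigr => j _; rewrite /E shift_funE.
rewrite -count_neg_adjacent_sums //; last first.
- by move=> i; apply: ext_neq; right.
- exact: ext_last.
rewrite -[n in iota 0 n](prednK n_gt0) /= first_step add0n /altdes.
apply: eq_in_count => -[|k]; rewrite mem_iota add1n prednK // => /andP [_ lt_k1n].
have lt_kn := ltnW lt_k1n.
by rewrite orbC !pword_std_lt ?alt_step_signE.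
Qed.

End Standardization.

Lemma prod_smaller_nbrs (R : comPzRingType) (x : R) n a (s : 'S_n) : a = 0%N \/ (n < a)%N ->
  \prod_(j < n) (1 + x ^+ smaller_nbrs (ext a n.+1 s) j.+1)
    = (1 + x) ^+ dda a n.+1 s * 2 ^+ valley a n.+1 s * (1 + x ^+ 2) ^+ peak a n.+1 s.
Proof.
move=> a_out.
transitivity (\prod_(1 <= k < n.+1) (1 + x ^+ smaller_nbrs (ext a n.+1 s) k)).
  by rewrite big_add1 big_mkord.
rewrite /index_iota subSS subn0 prod_1addX_count; last first.
  by move=> k; rewrite /smaller_nbrs; case: (_ < _)%N; case: (_ < _)%N.
rewrite /dda /valley /peak; congr (_ ^+ _ * _ ^+ _ * _ ^+ _).
all: apply: eq_in_count => k /(ext_neq_nbrs s a_out) [neq_pred neq_succ].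
all: by have [dd va pk] := smaller_nbrs_cases neq_pred neq_succ; rewrite ?dd ?va ?pk.
Qed.

Theorem theorem1p1 (n : nat) (hn : (1 <= n)%N) :
  (2 ^+ n * A_hat n =
     \sum_(s : 'S_n) (1 + 'X) ^+ dda n.+1 n.+1 s * 2 ^+ valley n.+1 n.+1 s
                      * (1 + 'X ^+ 2) ^+ peak n.+1 n.+1 s)
  /\
  (B_hat n =
     \sum_(s : 'S_n) (1 + 'X) ^+ dda 0 n.+1 s * 2 ^+ valley 0 n.+1 s
                      * (1 + 'X ^+ 2) ^+ peak 0 n.+1 s).
Proof.
split.
  transitivity (\sum_(f : {ffun 'I_n -> bool}) \sum_(t : 'S_n) 'X^(altdes (t * std_perm f)%g)
                 : {poly int}).
    have -> : 2 ^+ n = #|{ffun 'I_n -> bool}|%:R :> {poly int}.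
      by rewrite card_ffun card_bool card_ord natrX.
    rewrite /A_hat mulr_natl -sumr_const.
    by apply: eq_bigr => f _; rewrite (reindex_inj (mulIg (std_perm f))).
  rewrite exchange_big; apply: eq_bigr => t _.
  under eq_bigr => f _ do rewrite altdes_std_charges //.
  by rewrite sum_ffun_charges_perm prod_smaller_nbrs //; right.
transitivity (\sum_(s : 'S_n) \sum_(e : {ffun 'I_n -> bool}) 'X^(altdesB (s, e))
               : {poly int}).
  by rewrite pair_bigA; apply: eq_bigr => -[s e].
apply: eq_bigr => s _.
under eq_bigr => e _ do rewrite altdesB_charges //.
by rewrite sum_ffun_charges prod_smaller_nbrs //; left.
Qed.
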